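(* The energy $W^+_{\mathrm{magic}}\colon\mathrm{GL}^+(2)\to\mathbb{R}$, \[ W^+_{\mathrm{magic}}(F)=\frac{\lambda_{\max}}{\lambda_{\min}}-\log\!\left(\frac{\lambda_{\max}}{\lambda_{\min}}\right)+\log\det F, \] where $\lambda_{\max}\ge\lambda_{\min}>0$ are the ordered singular values of $F$, is not polyconvex.
   Context: $\mathrm{GL}^+(2)=\{F\in\mathbb{R}^{2\times2}:\det F>0\}$. A function $W\colon\mathrm{GL}^+(2)\to\mathbb{R}$ is polyconvex if its extension $\widehat W\colon\mathbb{R}^{2\times2}\to\mathbb{R}\cup\{+\infty\}$ ($\widehat W=W$ on $\mathrm{GL}^+(2)$, $+\infty$ elsewhere) can be written as $\widehat W(F)=P(F,\det F)$ for all $F\in\mathbb{R}^{2\times2}$ with some convex function $P\colon\mathbb{R}^{2\times2}\times\mathbb{R}\to\mathbb{R}\cup\{+\infty\}$. *)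

From HB Require Import structures.
From mathcomp Require Import all_boot all_order all_algebra.
From mathcomp Require Import all_classical all_reals.
From mathcomp Require Import exp.
Set Implicit Arguments. Unset Strict Implicit. Unset Printing Implicit Defensive.
Import Order.TTheory GRing.Theory Num.Theory.
Local Open Scope ring_scope.

(* Singular values of a 2x2 real matrix F: the square roots of the two
   eigenvalues of the symmetric positive semidefinite matrix C = F^T F,
   computed from its characteristic polynomial X^2 - tr C X + det C. *)
Definition cauchy_green {R : realType} (F : 'M[R]_2) : 'M[R]_2 := F^T *m F.

Definition eig_max {R : realType} (F : 'M[R]_2) : R :=
  let C := cauchy_green F in
  (\tr C + Num.sqrt (\tr C ^+ 2 - 4 * \det C)) / 2.

Definition eig_min {R : realType} (F : 'M[R]_2) : R :=
  let C := cauchy_green F in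
  (\tr C - Num.sqrt (\tr C ^+ 2 - 4 * \det C)) / 2.

Definition lambda_max {R : realType} (F : 'M[R]_2) : R := Num.sqrt (eig_max F).
Definition lambda_min {R : realType} (F : 'M[R]_2) : R := Num.sqrt (eig_min F).

Definition W_magic {R : realType} (F : 'M[R]_2) : R :=
  lambda_max F / lambda_min F - ln (lambda_max F / lambda_min F) + ln (\det F).

Definition ext_energy {R : realType} (W : 'M[R]_2 -> R) (F : 'M[R]_2) : \bar R :=
  if 0 < \det F then (W F)%:E else +oo%E.

Definition convex_ext {R : realType} (P : 'M[R]_2 -> R -> \bar R) : Prop :=
  (forall F d, P F d != -oo%E) /\
  forall (F1 F2 : 'M[R]_2) (d1 d2 t : R), 0 < t < 1 ->
    (P (t *: F1 + (1 - t) *: F2)%R (t * d1 + (1 - t) * d2)%R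
      <= t%:E * P F1 d1 + (1 - t)%:E * P F2 d2)%E.

(* W : GL+(2) -> R (given as a function on all matrices, only its values on
   GL+(2) matter) is polyconvex *)
Definition polyconvex {R : realType} (W : 'M[R]_2 -> R) : Prop :=
  exists P : 'M[R]_2 -> R -> \bar R, convex_ext P /\
    forall F : 'M[R]_2, ext_energy W F = P F (\det F).

From HB Require Import structures.
From mathcomp Require Import all_boot all_order all_algebra.
From mathcomp Require Import all_classical all_reals.
From mathcomp Require Import exp.
From mathcomp Require Import lra ring.
Import Order.TTheory GRing.Theory Num.Theory.
Local Open Scope ring_scope.

(* A polyconvex energy satisfies Jensen's inequality along every convex
   combination of matrices whose determinant is the same combination of their
   determinants.  On diagonal matrices W_magic(diag(a, b)) = a/b + 2 ln b for
   a >= b, so it equals 16 at diag(16, 1) and diag(1, 16), and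
   1 + 2 ln(1/16) <= -3 at I/16.  With weights 64/81, 17/162, 17/162 these
   three matrices combine to (11/6) I, whose determinant 121/36 is the same
   combination of the determinants 1/256, 16, 16; but W_magic((11/6) I) >= 1
   exceeds the combined energies, which are at most 80/81. *)

Section DiagonalMatrices.
Variable R : realType.

Definition diag2 (a b : R) : 'M[R]_2 :=
  diag_mx (\row_(j < 2) if j == ord0 then a else b).

Lemma tr_diag2 a b : \tr (diag2 a b) = a + b.
Proof. by rewrite mxtrace_diag big_ord_recl big_ord1 !mxE. Qed.

Lemma det_diag2 a b : \det (diag2 a b) = a * b.
Proof. by rewrite det_diag big_ord_recl big_ord1 !mxE. Qed.

Lemma cauchy_green_diag2 a b : cauchy_green (diag2 a b) = diag2 (a ^+ 2) (b ^+ 2).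
Proof.
rewrite /cauchy_green /diag2 tr_diag_mx mulmx_diag; congr diag_mx.
by apply/rowP => j; rewrite !mxE; case: ifP.
Qed.

Lemma scale_diag2 t a b : t *: diag2 a b = diag2 (t * a) (t * b).
Proof.
apply/matrixP => i j; rewrite !mxE.
by case: (i == j); case: (i == ord0); rewrite ?mulr1n ?mulr0n ?mulr0.
Qed.

Lemma add_diag2 a b a' b' : diag2 a b + diag2 a' b' = diag2 (a + a') (b + b').
Proof.
apply/matrixP => i j; rewrite !mxE.
by case: (i == j); case: (i == ord0); rewrite ?mulr1n ?mulr0n ?addr0.
Qed.

Lemma lambda_diag2 a b : 0 <= b <= a ->
  lambda_max (diag2 a b) = a /\ lambda_min (diag2 a b) = b.
Proof.
case/andP=> b0 ba; have a0 := le_trans b0 ba.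
rewrite /lambda_max /lambda_min /eig_max /eig_min.
rewrite cauchy_green_diag2 tr_diag2 det_diag2.
have -> : (a ^+ 2 + b ^+ 2) ^+ 2 - 4 * (a ^+ 2 * b ^+ 2) = (a ^+ 2 - b ^+ 2) ^+ 2.
  by ring.
have ba2 : b ^+ 2 <= a ^+ 2 by rewrite lerXn2r.
rewrite sqrtr_sqr ger0_norm ?subr_ge0 //.
have -> : (a ^+ 2 + b ^+ 2 + (a ^+ 2 - b ^+ 2)) / 2 = a ^+ 2 by field.
have -> : (a ^+ 2 + b ^+ 2 - (a ^+ 2 - b ^+ 2)) / 2 = b ^+ 2 by field.
by rewrite !sqrtr_sqr !ger0_norm.
Qed.

Lemma W_magic_diag2 a b : 0 <= b <= a ->
  W_magic (diag2 a b) = a / b - ln (a / b) + ln (a * b).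
Proof. by move=> /lambda_diag2[lmax lmin]; rewrite /W_magic lmax lmin det_diag2. Qed.

Lemma W_magic_diag2C a b : W_magic (diag2 a b) = W_magic (diag2 b a).
Proof.
rewrite /W_magic /lambda_max /lambda_min /eig_max /eig_min.
rewrite !cauchy_green_diag2 !tr_diag2 !det_diag2.
by rewrite (addrC (b ^+ 2)) (mulrC (b ^+ 2)) (mulrC b).
Qed.

Lemma W_magic_scalar c : 0 < c -> W_magic (diag2 c c) = 1 + 2 * ln c.
Proof.
move=> c0; rewrite W_magic_diag2 ?lexx ?ltW // divff ?gt_eqF // ln1 subr0.
by rewrite lnM ?posrE // mulr_natl mulr2n.
Qed.

End DiagonalMatrices.
Arguments diag2 {R}.

Section PolyconvexJensen.
Variable R : realType.
Implicit Types (F : 'M[R]_2) (t s : R).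

Lemma convex_ext_le3 (P : 'M[R]_2 -> R -> \bar R) F1 F2 F3 d1 d2 d3 w1 w2 w3 t s :
  convex_ext P -> 0 < t < 1 -> 0 < s < 1 ->
  P F1 d1 = w1%:E -> P F2 d2 = w2%:E -> P F3 d3 = w3%:E ->
  (P (t *: F1 + (1 - t) *: (s *: F2 + (1 - s) *: F3))%R
     (t * d1 + (1 - t) * (s * d2 + (1 - s) * d3))%R
   <= (t * w1 + (1 - t) * (s * w2 + (1 - s) * w3))%:E)%E.
Proof.
move=> [_ Pconv] t01 s01 P1 P2 P3.
have Pinner := Pconv F2 F3 d2 d3 s s01; rewrite P2 P3 -!EFinM -EFinD in Pinner.
apply: le_trans (Pconv _ _ _ _ _ t01) _.
rewrite P1 (EFinD (t * w1)) !EFinM; apply: leeD2l.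
by apply: lee_wpmul2l Pinner; rewrite lee_fin; lra.
Qed.

Lemma polyconvex_jensen3 (W : 'M[R]_2 -> R) F1 F2 F3 t s :
  polyconvex W -> 0 < t < 1 -> 0 < s < 1 ->
  0 < \det F1 -> 0 < \det F2 -> 0 < \det F3 ->
  \det (t *: F1 + (1 - t) *: (s *: F2 + (1 - s) *: F3))
    = t * \det F1 + (1 - t) * (s * \det F2 + (1 - s) * \det F3) ->
  W (t *: F1 + (1 - t) *: (s *: F2 + (1 - s) *: F3))
    <= t * W F1 + (1 - t) * (s * W F2 + (1 - s) * W F3).
Proof.
move=> [P [Pconv PW]] t01 s01 F1pos F2pos F3pos detG.
have PWpos F : 0 < \det F -> P F (\det F) = (W F)%:E.
  by move=> Fpos; rewrite -PW /ext_energy Fpos.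
have Gpos : 0 < \det (t *: F1 + (1 - t) *: (s *: F2 + (1 - s) *: F3)).
  case/andP: t01 => t0 t1; case/andP: s01 => s0 s1.
  rewrite detG; apply: addr_gt0; first exact: mulr_gt0.
  apply: mulr_gt0; first by rewrite subr_gt0.
  by apply: addr_gt0; apply: mulr_gt0; rewrite ?subr_gt0.
rewrite -lee_fin -PWpos // detG.
by apply: convex_ext_le3; rewrite ?PWpos.
Qed.

End PolyconvexJensen.

Theorem lemma4p3 (R : realType) : ~ polyconvex (@W_magic R).
Proof.
move=> /polyconvex_jensen3 jensen.
have comb : 64 / 81 *: diag2 (1 / 16) (1 / 16)
    + (1 - 64 / 81) *: (1 / 2 *: diag2 16 1 + (1 - 1 / 2) *: diag2 1 16)
    = diag2 (11 / 6) (11 / 6) :> 'M[R]_2.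
  by rewrite !(scale_diag2, add_diag2); congr diag2; lra.
have W_F2 : W_magic (diag2 16 1 : 'M[R]_2) = 16.
  by rewrite W_magic_diag2 ?invr1 ?mulr1 ?subrK //; lra.
have W_F3 : W_magic (diag2 1 16 : 'M[R]_2) = 16 by rewrite W_magic_diag2C.
have ln_inv16 : ln (1 / 16 : R) <= -2.
  have -> : 1 / 16 = 2^-1 ^+ 4 :> R by rewrite exprVn div1r -natrX.
  have half : 1 + - 2^-1 = 2^-1 :> R by lra.
  by have := @le_ln1Dx R (- 2^-1); rewrite half lnXn ?invr_gt0 //; lra.
have ln_c : 0 <= ln (11 / 6 : R) by apply: ln_ge0; lra.
have := jensen (diag2 (1 / 16) (1 / 16)) (diag2 16 1) (diag2 1 16) (64 / 81) (1 / 2).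
by rewrite comb !det_diag2 W_F2 W_F3 !W_magic_scalar; lra.
Qed.
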